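(* Let $A\in\mathbf L(\mathfrak H)$ be a normal contraction and let $\Sigma=\{T;\mathfrak D_{A^*},\mathfrak D_A,\mathfrak H\}$ be the system with $T=\begin{pmatrix}-A^*&D_A\\ D_{A^*}&A\end{pmatrix}:\mathfrak D_{A^*}\oplus\mathfrak H\to\mathfrak D_A\oplus\mathfrak H$. Then its controllable and observable subspaces coincide, $\mathfrak H^c_\Sigma=\mathfrak H^o_\Sigma$, where $\mathfrak H^c_\Sigma=\overline{\rm span}\{A^nD_{A^*}\mathfrak D_{A^*}:n\ge0\}$ and $\mathfrak H^o_\Sigma=\overline{\rm span}\{A^{*n}D_A\mathfrak D_A:n\ge0\}$, and the following are equivalent: (i) $\Sigma$ is simple; (ii) $\Sigma$ is controllable; (iii) $\Sigma$ is observable; (iv) $\Sigma$ is minimal.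
   Context: A system $\tau=\{T;\mathfrak M,\mathfrak N,\mathfrak H\}$ consists of Hilbert spaces $\mathfrak M$ (input), $\mathfrak N$ (output), $\mathfrak H$ (state) and a bounded operator $T=\begin{pmatrix}D&C\\ B&A\end{pmatrix}:\mathfrak M\oplus\mathfrak H\to\mathfrak N\oplus\mathfrak H$. Its controllable and observable subspaces are $\mathfrak H^c=\overline{\rm span}\{A^nB\mathfrak M:n\ge0\}$, $\mathfrak H^o=\overline{\rm span}\{A^{*n}C^*\mathfrak N:n\ge0\}$; $\tau$ is controllable if $\mathfrak H^c=\mathfrak H$, observable if $\mathfrak H^o=\mathfrak H$, minimal if both, simple if $\mathfrak H=\overline{\mathfrak H^c+\mathfrak H^o}$. $D_A=(I-A^*A)^{1/2}$, $\mathfrak D_A=\overline{\rm ran}\,D_A$. *)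

From Stdlib Require Import Reals.
Open Scope R_scope.
Set Implicit Arguments.

Record C := mkC { Cre : R ; Cim : R }.
Definition C0 : C := mkC 0 0.
Definition C1 : C := mkC 1 0.
Definition Cadd (a b : C) : C := mkC (Cre a + Cre b) (Cim a + Cim b).
Definition Cmul (a b : C) : C :=
  mkC (Cre a * Cre b - Cim a * Cim b) (Cre a * Cim b + Cim a * Cre b).
Definition Cconj (a : C) : C := mkC (Cre a) (- Cim a).

Record Hilbert := {
  car :> Type;
  vadd : car -> car -> car;
  vzero : car;
  vopp : car -> car;
  vscal : C -> car -> car;
  inner : car -> car -> C;
  vadd_assoc : forall x y z, vadd x (vadd y z) = vadd (vadd x y) z;
  vadd_comm : forall x y, vadd x y = vadd y x;
  vadd_0 : forall x, vadd x vzero = x;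
  vadd_opp : forall x, vadd x (vopp x) = vzero;
  vscal_1 : forall x, vscal C1 x = x;
  vscal_mul : forall a b x, vscal a (vscal b x) = vscal (Cmul a b) x;
  vscal_addv : forall a x y, vscal a (vadd x y) = vadd (vscal a x) (vscal a y);
  vscal_adds : forall a b x, vscal (Cadd a b) x = vadd (vscal a x) (vscal b x);
  inner_add_l : forall x y z, inner (vadd x y) z = Cadd (inner x z) (inner y z);
  inner_scal_l : forall a x y, inner (vscal a x) y = Cmul a (inner x y);
  inner_conj : forall x y, inner y x = Cconj (inner x y);
  inner_pos : forall x, 0 <= Cre (inner x x);
  inner_def : forall x, Cre (inner x x) = 0 -> x = vzero;
  complete : forall u : nat -> car,
    (forall eps, 0 < eps -> exists N, forall m n, (N <= m)%nat -> (N <= n)%nat ->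
        sqrt (Cre (inner (vadd (u m) (vopp (u n))) (vadd (u m) (vopp (u n))))) < eps) ->
    exists l, forall eps, 0 < eps -> exists N, forall n, (N <= n)%nat ->
        sqrt (Cre (inner (vadd (u n) (vopp l)) (vadd (u n) (vopp l)))) < eps
}.

Arguments vadd {h}. Arguments vzero {h}. Arguments vopp {h}.
Arguments vscal {h}. Arguments inner {h}.

Section Ops.
Context {H : Hilbert}.

Definition norm (x : H) : R := sqrt (Cre (inner x x)).
Definition vsub (x y : H) : H := vadd x (vopp y).

Definition bounded_linear (T : H -> H) : Prop :=
  (forall x y, T (vadd x y) = vadd (T x) (T y)) /\
  (forall a x, T (vscal a x) = vscal a (T x)) /\
  (exists M, forall x, norm (T x) <= M * norm x).

Definition is_adjoint (T Ts : H -> H) : Prop :=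
  forall x y, inner (T x) y = inner x (Ts y).

Definition contraction (T : H -> H) : Prop := forall x, norm (T x) <= norm x.

Definition normal_op (T Ts : H -> H) : Prop := forall x, T (Ts x) = Ts (T x).

(* D is the defect operator D_T = (I - T^* T)^{1/2}: the (unique) positive
   square root of I - T^* T. *)
Definition is_defect (T Ts D : H -> H) : Prop :=
  bounded_linear D /\ is_adjoint D D /\
  (forall x, 0 <= Cre (inner (D x) x)) /\
  (forall x, D (D x) = vsub x (Ts (T x))).

Definition range (T : H -> H) : H -> Prop := fun y => exists x, y = T x.

Definition closure (S : H -> Prop) : H -> Prop :=
  fun x => forall eps, 0 < eps -> exists y, S y /\ norm (vsub x y) < eps.

Inductive span (S : H -> Prop) : H -> Prop :=
| span_zero : span S vzero
| span_cons : forall a y x, S y -> span S x -> span S (vadd (vscal a y) x).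

Definition cspan (S : H -> Prop) : H -> Prop := closure (span S).

Definition sumset (U V : H -> Prop) : H -> Prop :=
  fun x => exists u v, U u /\ V v /\ x = vadd u v.

Definition defect_space (D : H -> H) : H -> Prop := closure (range D).

Definition sets_eq (U V : H -> Prop) : Prop := forall x, U x <-> V x.
Definition full (U : H -> Prop) : Prop := forall x, U x.

(* Controllable subspace of a system with main operator A and input operator
   B defined on the input space M (a subset of H here):
   closed span {A^n B M : n >= 0}. *)
Definition ctrl_space (A B : H -> H) (M : H -> Prop) : H -> Prop :=
  cspan (fun x => exists n m, M m /\ x = Nat.iter n A (B m)).
Definition obs_space (As Cs : H -> H) (N : H -> Prop) : H -> Prop :=
  cspan (fun x => exists n k, N k /\ x = Nat.iter n As (Cs k)).

(* The system Sigma = {[-A^*, D_A; D_{A^*}, A]; D_{A^*}, D_A, H}: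
   B = D_{A^*} on D_{A^*}-space, C = D_A : H -> D_A-space, so C^* = D_A
   restricted to the D_A-space. *)
Definition Hc_Sigma (A DAs : H -> H) := ctrl_space A DAs (defect_space DAs).
Definition Ho_Sigma (As DA : H -> H) := obs_space As DA (defect_space DA).

Definition sys_controllable (Hc : H -> Prop) := full Hc.
Definition sys_observable (Ho : H -> Prop) := full Ho.
Definition sys_minimal (Hc Ho : H -> Prop) := full Hc /\ full Ho.
Definition sys_simple (Hc Ho : H -> Prop) := full (closure (sumset Hc Ho)).

End Ops.

(* Normality gives D_{A^*}^2 = I - A A^* = I - A^* A = D_A^2, and A
   (resp. A^* ) commutes with this operator.  For any bounded T and any bounded
   linear D with T D^2 = D^2 T, the closed span of {T^n D m : m in cl(ran D)}
   is exactly cl(ran D^2): each generator is a continuous image of cl(ran D)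
   landing in cl(ran D^2), which is a closed subspace, and conversely every
   D^2 w is a generator (n = 0, m = D w).  Applied to (A, D_{A^*}) and to
   (A^*, D_A), both subspaces equal cl(ran D_A^2).  Once H^c = H^o, simplicity
   (density of H^c + H^o = H^c) is fullness of H^c, and the four notions agree. *)
From Pilot Require Import Defs.
From Stdlib Require Import Reals Lra Psatz.
Open Scope R_scope.

Arguments vadd_assoc {h}. Arguments vadd_comm {h}. Arguments vadd_0 {h}.
Arguments vadd_opp {h}. Arguments vscal_1 {h}. Arguments vscal_addv {h}.
Arguments inner_add_l {h}. Arguments inner_scal_l {h}. Arguments inner_conj {h}.
Arguments inner_pos {h}.

Section VectorAlgebra.
Context {H : Hilbert}.

Lemma vadd_0l (x : H) : vadd vzero x = x.
Proof. rewrite vadd_comm. apply vadd_0. Qed.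

Lemma vadd_cancel (x y z : H) : vadd x z = vadd y z -> x = y.
Proof.
  intro E. rewrite <- (vadd_0 x), <- (vadd_0 y), <- (vadd_opp z), !vadd_assoc, E.
  reflexivity.
Qed.

Lemma opp_unique (x y : H) : vadd x y = vzero -> y = vopp x.
Proof.
  intro E. apply (vadd_cancel _ _ x).
  rewrite (vadd_comm y), E, vadd_comm, vadd_opp. reflexivity.
Qed.

Lemma opp_add (x y : H) : vopp (vadd x y) = vadd (vopp x) (vopp y).
Proof.
  symmetry. apply opp_unique.
  rewrite <- vadd_assoc, (vadd_assoc y), (vadd_comm y), <- (vadd_assoc (vopp x)),
    (vadd_opp y), vadd_0, vadd_opp.
  reflexivity.
Qed.

Lemma additive_zero (T : H -> H) :
  (forall x y, T (vadd x y) = vadd (T x) (T y)) -> T vzero = vzero.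
Proof.
  intro Ha. apply (vadd_cancel _ _ (T vzero)).
  rewrite <- Ha, !vadd_0, vadd_0l. reflexivity.
Qed.

Lemma additive_sub (T : H -> H) :
  (forall x y, T (vadd x y) = vadd (T x) (T y)) ->
  forall x y, T (vsub x y) = vsub (T x) (T y).
Proof.
  intros Ha x y. unfold vsub. rewrite Ha. f_equal.
  apply opp_unique. rewrite <- Ha, vadd_opp. apply (additive_zero _ Ha).
Qed.

Lemma sub_add (x y u v : H) :
  vsub (vadd x y) (vadd u v) = vadd (vsub x u) (vsub y v).
Proof.
  unfold vsub. rewrite opp_add, !vadd_assoc. f_equal.
  rewrite <- !vadd_assoc. f_equal. apply vadd_comm.
Qed.

Lemma sub_chain (x y z : H) : vsub x z = vadd (vsub x y) (vsub y z).
Proof.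
  unfold vsub.
  rewrite <- !vadd_assoc, (vadd_assoc (vopp y)), (vadd_comm (vopp y)), vadd_opp, vadd_0l.
  reflexivity.
Qed.

End VectorAlgebra.

Section Norm.
Context {H : Hilbert}.

Lemma re_add_l (x y z : H) :
  Cre (inner (vadd x y) z) = Cre (inner x z) + Cre (inner y z).
Proof. rewrite inner_add_l. reflexivity. Qed.

Lemma re_sym (x y : H) : Cre (inner x y) = Cre (inner y x).
Proof. rewrite (inner_conj y x). reflexivity. Qed.

Lemma re_scal_l (a : Defs.C) (x y : H) :
  Cre (inner (vscal a x) y) = Cre a * Cre (inner x y) - Cim a * Cim (inner x y).
Proof. rewrite inner_scal_l. reflexivity. Qed.

Lemma im_self (x : H) : Cim (inner x x) = 0.
Proof.
  assert (E := inner_conj x x). destruct (inner x x) as [a b]. simpl in *.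
  injection E. lra.
Qed.

Lemma norm_zero : norm (@vzero H) = 0.
Proof.
  unfold norm. assert (E := re_add_l (@vzero H) vzero vzero).
  rewrite vadd_0 in E. replace (Cre (inner vzero vzero)) with 0 by lra. apply sqrt_0.
Qed.

Lemma norm_nonneg (x : H) : 0 <= norm x.
Proof. apply sqrt_pos. Qed.

Lemma quad_expand (x y : H) (t : R) :
  Cre (inner (vadd x (vscal (mkC t 0) y)) (vadd x (vscal (mkC t 0) y))) =
  Cre (inner x x) + 2 * t * Cre (inner x y) + t * t * Cre (inner y y).
Proof.
  rewrite re_add_l, re_scal_l, (re_sym x), re_add_l, re_scal_l.
  rewrite (re_sym y (vadd _ _)), re_add_l, re_scal_l. simpl.
  rewrite (re_sym y x). ring.
Qed.

(* Cauchy-Schwarz for the real part, from nonnegativity of that quadratic. *)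
Lemma cauchy_schwarz_sq (x y : H) :
  Cre (inner x y) * Cre (inner x y) <= Cre (inner x x) * Cre (inner y y).
Proof.
  set (a := Cre (inner x x)); set (b := Cre (inner x y)); set (c := Cre (inner y y)).
  assert (Q : forall t, 0 <= a + 2 * t * b + t * t * c).
  { intro t. unfold a, b, c. rewrite <- quad_expand. apply inner_pos. }
  assert (Ha : 0 <= a) by apply inner_pos.
  assert (Hc : 0 <= c) by apply inner_pos.
  destruct (Req_dec c 0) as [E|E].
  - rewrite E. destruct (Req_dec b 0) as [Eb|Eb]; [rewrite Eb; lra|].
    exfalso. specialize (Q (- (a + 1) / (2 * b))). rewrite E in Q.
    assert (2 * (- (a + 1) / (2 * b)) * b = - (a + 1)) by (field; auto). nra.
  - specialize (Q (- b / c)).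
    replace (a + 2 * (- b / c) * b + (- b / c) * (- b / c) * c)
      with (a - b * b / c) in Q by (field; auto).
    apply Rmult_le_reg_r with (/ c); [apply Rinv_0_lt_compat; lra|].
    replace (a * c * / c) with a by (field; lra). unfold Rdiv in Q. lra.
Qed.

Lemma cauchy_schwarz (x y : H) : Cre (inner x y) <= norm x * norm y.
Proof.
  unfold norm. rewrite <- sqrt_mult by apply inner_pos.
  apply Rle_trans with (Rabs (Cre (inner x y))); [apply Rle_abs|].
  rewrite <- sqrt_Rsqr_abs. apply sqrt_le_1_alt. apply cauchy_schwarz_sq.
Qed.

Lemma norm_triangle (x y : H) : norm (vadd x y) <= norm x + norm y.
Proof.
  assert (E : Cre (inner (vadd x y) (vadd x y)) =
              Cre (inner x x) + 2 * Cre (inner x y) + Cre (inner y y)).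
  { rewrite re_add_l, (re_sym x), (re_sym y), !re_add_l, (re_sym y x). ring. }
  assert (cs := cauchy_schwarz x y).
  assert (nx := norm_nonneg x). assert (ny := norm_nonneg y).
  unfold norm at 1. rewrite E.
  rewrite <- (sqrt_Rsqr (norm x + norm y)) by lra. apply sqrt_le_1_alt.
  unfold Rsqr, norm in *.
  rewrite <- (sqrt_sqrt (Cre (inner x x))) at 1 by apply inner_pos.
  rewrite <- (sqrt_sqrt (Cre (inner y y))) at 1 by apply inner_pos.
  nra.
Qed.

Lemma norm_scal (a : Defs.C) (x : H) :
  norm (vscal a x) = sqrt (Cre a * Cre a + Cim a * Cim a) * norm x.
Proof.
  unfold norm. rewrite <- sqrt_mult; [| nra | apply inner_pos]. f_equal.
  rewrite re_scal_l, (inner_conj (vscal a x) x), inner_scal_l.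
  assert (Hi := im_self x). destruct (inner x x) as [p q]. simpl in *. subst q.
  destruct a as [ar ai]. simpl. ring.
Qed.

End Norm.

Section Lipschitz.
Context {H : Hilbert}.

Definition Lip (f : H -> H) (K : R) : Prop :=
  0 < K /\ forall x y, norm (vsub (f x) (f y)) <= K * norm (vsub x y).

Lemma bl_lip (T : H -> H) : bounded_linear T -> exists K, Lip T K.
Proof.
  intros [Ha [_ [M HM]]].
  assert (M <= Rabs M) by apply Rle_abs. assert (0 <= Rabs M) by apply Rabs_pos.
  exists (Rabs M + 1). split; [lra|].
  intros x y. rewrite <- (additive_sub _ Ha). eapply Rle_trans; [apply HM|].
  apply Rmult_le_compat_r; [apply norm_nonneg | lra].
Qed.

Lemma lip_comp (f g : H -> H) K1 K2 :
  Lip f K1 -> Lip g K2 -> Lip (fun x => f (g x)) (K1 * K2).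
Proof.
  intros [H1 F] [H2 G]. split; [nra|].
  intros x y. eapply Rle_trans; [apply F|]. rewrite Rmult_assoc.
  apply Rmult_le_compat_l; [lra | apply G].
Qed.

Lemma lip_iter (T : H -> H) K : Lip T K -> forall n, exists K', Lip (Nat.iter n T) K'.
Proof.
  intros LT n. induction n as [|n [K' IH]].
  - exists 1. split; [lra|]. intros x y. simpl. lra.
  - exists (K * K'). exact (lip_comp _ _ _ _ LT IH).
Qed.

Lemma lip_scal (a : Defs.C) : exists K, Lip (@vscal H a) K.
Proof.
  assert (0 <= sqrt (Cre a * Cre a + Cim a * Cim a)) by apply sqrt_pos.
  exists (sqrt (Cre a * Cre a + Cim a * Cim a) + 1). split; [lra|].
  intros x y. rewrite <- (additive_sub _ (vscal_addv a)), norm_scal.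
  apply Rmult_le_compat_r; [apply norm_nonneg | lra].
Qed.

End Lipschitz.

Section Closure.
Context {H : Hilbert}.

Lemma closure_incl (S : H -> Prop) x : S x -> closure S x.
Proof.
  intros Sx eps He. exists x. split; auto.
  unfold vsub. rewrite vadd_opp, norm_zero. exact He.
Qed.

Lemma closure_mono (S S' : H -> Prop) :
  (forall x, S x -> S' x) -> forall x, closure S x -> closure S' x.
Proof.
  intros I x Cx eps He. destruct (Cx eps He) as [y [Sy Ny]]. exists y; auto.
Qed.

Lemma closure_closure (S : H -> Prop) x : closure (closure S) x -> closure S x.
Proof.
  intros Cx eps He.
  destruct (Cx (eps / 2)) as [y [Cy Ny]]; [lra|].
  destruct (Cy (eps / 2)) as [z [Sz Nz]]; [lra|].
  exists z. split; auto. rewrite (sub_chain x y z).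
  eapply Rle_lt_trans; [apply norm_triangle | lra].
Qed.

Lemma closure_add (S : H -> Prop) :
  (forall x y, S x -> S y -> S (vadd x y)) ->
  forall x y, closure S x -> closure S y -> closure S (vadd x y).
Proof.
  intros Ha x y Cx Cy eps He.
  destruct (Cx (eps / 2)) as [u [Su Nu]]; [lra|].
  destruct (Cy (eps / 2)) as [v [Sv Nv]]; [lra|].
  exists (vadd u v). split; auto. rewrite sub_add.
  eapply Rle_lt_trans; [apply norm_triangle | lra].
Qed.

Lemma closure_map (f : H -> H) K (S S' : H -> Prop) :
  Lip f K -> (forall s, S s -> S' (f s)) -> forall x, closure S x -> closure S' (f x).
Proof.
  intros [HK Hf] Hs x Cx eps He.
  destruct (Cx (eps / K)) as [y [Sy Ny]]; [apply Rdiv_lt_0_compat; lra|].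
  exists (f y). split; auto. eapply Rle_lt_trans; [apply Hf|].
  apply Rmult_lt_compat_l with (r := K) in Ny; auto.
  replace (K * (eps / K)) with eps in Ny by (field; lra). exact Ny.
Qed.

Lemma span_add (S : H -> Prop) x y : span S x -> span S y -> span S (vadd x y).
Proof.
  intros Sx Sy. induction Sx as [|a z x Sz Sx IH].
  - rewrite vadd_0l. exact Sy.
  - rewrite <- vadd_assoc. apply span_cons; auto.
Qed.

Lemma cspan_add (S : H -> Prop) x y : cspan S x -> cspan S y -> cspan S (vadd x y).
Proof. apply closure_add, span_add. Qed.

Lemma cspan_least (G V : H -> Prop) :
  V vzero -> (forall x y, V x -> V y -> V (vadd x y)) ->
  (forall a x, V x -> V (vscal a x)) -> (forall x, closure V x -> V x) ->
  (forall x, G x -> V x) -> forall x, cspan G x -> V x.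
Proof.
  intros V0 Vadd Vscal Vclosed VG x Cx. apply Vclosed. revert x Cx.
  apply closure_mono. intros x Sp.
  induction Sp as [|a y x Gy Sp IH]; auto.
Qed.

End Closure.

Section ClosedRange.
Context {H : Hilbert}.

Lemma closure_range_subspace (D : H -> H) : bounded_linear D ->
  let V := closure (range D) in
  V vzero /\ (forall x y, V x -> V y -> V (vadd x y)) /\
  (forall a x, V x -> V (vscal a x)) /\ (forall x, closure V x -> V x).
Proof.
  intros BD V. destruct BD as [Da [Ds _]]. split; [|split; [|split]].
  - apply closure_incl. exists vzero. symmetry. exact (additive_zero _ Da).
  - apply closure_add. intros x y [u ->] [v ->]. exists (vadd u v). symmetry. apply Da.
  - intros a x Vx. destruct (lip_scal (H := H) a) as [K LK].
    apply (closure_map _ _ (range D) _ LK); auto.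
    intros s [w ->]. exists (vscal a w). symmetry. apply Ds.
  - apply closure_closure.
Qed.

Lemma bounded_linear_comp (D E : H -> H) :
  bounded_linear D -> bounded_linear E -> bounded_linear (fun x => D (E x)).
Proof.
  intros [Da [Ds [M HM]]] [Ea [Es [N HN]]].
  split; [intros; rewrite Ea; apply Da|]. split; [intros; rewrite Es; apply Ds|].
  exists (Rabs M * Rabs N). intro x.
  assert (M <= Rabs M) by apply Rle_abs. assert (N <= Rabs N) by apply Rle_abs.
  assert (0 <= norm (E x)) by apply norm_nonneg. assert (0 <= norm x) by apply norm_nonneg.
  assert (0 <= Rabs M) by apply Rabs_pos.
  assert (HEx : norm (E x) <= Rabs N * norm x)
    by (eapply Rle_trans; [apply HN | apply Rmult_le_compat_r; auto]).
  eapply Rle_trans; [apply HM|]. rewrite Rmult_assoc.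
  apply Rle_trans with (Rabs M * norm (E x)); [apply Rmult_le_compat_r; auto|].
  apply Rmult_le_compat_l; auto.
Qed.

Lemma iter_comm (T P : H -> H) : (forall x, T (P x) = P (T x)) ->
  forall n x, Nat.iter n T (P x) = P (Nat.iter n T x).
Proof. intros Hc n x. induction n; simpl; auto. rewrite IHn. apply Hc. Qed.

Lemma cspan_iter_defect (T D : H -> H) :
  bounded_linear T -> bounded_linear D -> (forall x, T (D (D x)) = D (D (T x))) ->
  sets_eq (cspan (fun x => exists n m, closure (range D) m /\ x = Nat.iter n T (D m)))
          (closure (range (fun y => D (D y)))).
Proof.
  intros BT BD Hc.
  destruct (bl_lip _ BT) as [KT LT]. destruct (bl_lip _ BD) as [KD LD].
  destruct (closure_range_subspace _ (bounded_linear_comp _ _ BD BD))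
    as [V0 [Vadd [Vscal Vclosed]]].
  intro x. split.
  - apply cspan_least; auto. intros g [n [m [Cm ->]]].
    destruct (lip_iter _ _ LT n) as [K' LI].
    apply (closure_map (fun m => Nat.iter n T (D m)) _ (range D) _
             (lip_comp _ _ _ _ LI LD)); auto.
    intros s [w ->]. exists (Nat.iter n T w).
    exact (iter_comm T (fun y => D (D y)) Hc n w).
  - apply closure_mono. intros z [w ->].
    rewrite <- (vadd_0 (D (D w))), <- (vscal_1 (D (D w))).
    apply span_cons; [|apply span_zero].
    exists 0%nat, (D w). split; auto. apply closure_incl. exists w. reflexivity.
Qed.

End ClosedRange.

Lemma normal_defect_squares {H : Hilbert} (A As DA DAs : H -> H) :
  bounded_linear A -> bounded_linear As -> normal_op A As ->
  is_defect A As DA -> is_defect As A DAs ->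
  (forall y, DAs (DAs y) = DA (DA y)) /\
  (forall y, A (DAs (DAs y)) = DAs (DAs (A y))) /\
  (forall y, As (DA (DA y)) = DA (DA (As y))).
Proof.
  intros [Aa _] [Asa _] Hn [_ [_ [_ DA2]]] [_ [_ [_ DAs2]]].
  split; [|split]; intro y.
  - rewrite DAs2, DA2, Hn. reflexivity.
  - rewrite !DAs2, (additive_sub _ Aa), Hn. reflexivity.
  - rewrite !DA2, (additive_sub _ Asa), Hn. reflexivity.
Qed.

Lemma simple_iff_controllable {H : Hilbert} (G : H -> Prop) (Ho : H -> Prop) :
  sets_eq (cspan G) Ho -> (sys_simple (cspan G) Ho <-> sys_controllable (cspan G)).
Proof.
  intro Heq. unfold sys_simple, sys_controllable, full. split.
  - intros F x. apply closure_closure.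
    refine (closure_mono _ _ _ x (F x)). intros z [u [v [Hu [Hv ->]]]].
    apply cspan_add; [exact Hu | apply Heq, Hv].
  - intros F x. apply closure_incl. exists x, vzero.
    split; [apply F|]. split; [apply Heq, F | symmetry; apply vadd_0].
Qed.

Theorem proposition2p3 (H : Hilbert) (A As DA DAs : H -> H) :
  bounded_linear A -> bounded_linear As -> is_adjoint A As ->
  normal_op A As -> contraction A ->
  is_defect A As DA -> is_defect As A DAs ->
  sets_eq (Hc_Sigma A DAs) (Ho_Sigma As DA) /\
  ((sys_simple (Hc_Sigma A DAs) (Ho_Sigma As DA) <-> sys_controllable (Hc_Sigma A DAs)) /\
   (sys_controllable (Hc_Sigma A DAs) <-> sys_observable (Ho_Sigma As DA)) /\
   (sys_observable (Ho_Sigma As DA) <-> sys_minimal (Hc_Sigma A DAs) (Ho_Sigma As DA))).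
Proof.
  intros BA BAs _ Hn _ DefA DefAs.
  destruct (normal_defect_squares _ _ _ _ BA BAs Hn DefA DefAs) as [EqSq [C1 C2]].
  destruct DefA as [BDA _]. destruct DefAs as [BDAs _].
  (* H^c = cl ran D_{A^*}^2 = cl ran D_A^2 = H^o *)
  assert (Hc_eq : sets_eq (Hc_Sigma A DAs) (closure (range (fun y => DA (DA y))))).
  { intro x. unfold Hc_Sigma, ctrl_space, defect_space.
    rewrite (cspan_iter_defect _ _ BA BDAs C1 x).
    split; apply closure_mono; intros z [w ->]; exists w; auto. }
  assert (Ho_eq : sets_eq (Ho_Sigma As DA) (closure (range (fun y => DA (DA y)))))
    by exact (cspan_iter_defect _ _ BAs BDA C2).
  assert (Heq : sets_eq (Hc_Sigma A DAs) (Ho_Sigma As DA)).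
  { intro x. rewrite (Hc_eq x), (Ho_eq x). tauto. }
  split; [exact Heq | split; [exact (simple_iff_controllable _ _ Heq) | split]];
    unfold sys_controllable, sys_observable, sys_minimal, full;
    firstorder.
Qed.
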